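(* Let $P$ be a poset with an $\mathbb{R}$-action $\Lambda$. Let $I,J$ be intervals of $P$ and $\epsilon\ge0$ with $I\subseteq\mathrm{Ex}^\Lambda_\epsilon(J)$ and $J\subseteq\mathrm{Ex}^\Lambda_\epsilon(I)$. Then $$I\cap\Lambda_{-\epsilon}(J)\cap\Lambda_{-2\epsilon}(I)=I\cap\Lambda_{-2\epsilon}(I)$$ and $$J\cap\Lambda_{-\epsilon}(I)\cap\Lambda_{-2\epsilon}(J)=J\cap\Lambda_{-2\epsilon}(J).$$
   Context: An interval of a poset $P$ is a nonempty convex and connected subset (convex: $p,q\in I$, $p\le r\le q$ imply $r\in I$; connected: any two elements are joined by a finite sequence in $I$ with consecutive ones comparable). For $A\subseteq P$ nonempty, $A^\uparrow=\{p:\exists a\in A,\ a\le p\}$ and $A^\downarrow=\{p:\exists a\in A,\ p\le a\}$; $\emptyset^\uparrow=\emptyset^\downarrow=P$. An $\mathbb{R}$-action on $P$ is a family $\{\Lambda_\epsilon\}_{\epsilon\ge0}$ of poset automorphisms with $p\le\Lambda_\epsilon(p)$, $\Lambda_0=\mathrm{id}$ and $\Lambda_\epsilon\Lambda_\zeta=\Lambda_{\epsilon+\zeta}$. Write $\Lambda_{-\epsilon}=\Lambda_\epsilon^{-1}$; $\Lambda_{-\epsilon}(J)$ denotes the image. $\mathrm{Ex}^\Lambda_\epsilon(A)=\Lambda_\epsilon^{-1}(A)^\uparrow\cap\Lambda_\epsilon(A)^\downarrow$, with $\Lambda_\epsilon^{-1}(A)$ the preimage. *)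

From HB Require Import structures.
From mathcomp Require Import all_boot all_order all_algebra.
From mathcomp Require Import boolp classical_sets reals.
Set Implicit Arguments. Unset Strict Implicit. Unset Printing Implicit Defensive.
Import Order.TTheory GRing.Theory Num.Theory.
Local Open Scope classical_set_scope.
Local Open Scope ring_scope.

Section Defs.
Context {d : Order.disp_t} {P : porderType d}.

Definition convex_set (I : set P) : Prop :=
  forall p q r, I p -> I q -> (p <= r)%O -> (r <= q)%O -> I r.

Definition connected_set (I : set P) : Prop :=
  forall p q, I p -> I q ->
    exists (n : nat) (f : nat -> P),
      [/\ f 0%N = p, f n = q,
          (forall i, (i <= n)%N -> I (f i)) &
          (forall i, (i < n)%N -> (f i >=< f i.+1)%O)].

Definition is_interval (I : set P) : Prop :=
  I !=set0 /\ convex_set I /\ connected_set I.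

(* upsets / downsets, with the convention that the empty set gives all of P *)
Definition upset (A : set P) : set P :=
  if pselect (A = set0) is left _ then setT
  else [set p | exists2 a, A a & (a <= p)%O].

Definition downset (A : set P) : set P :=
  if pselect (A = set0) is left _ then setT
  else [set p | exists2 a, A a & (p <= a)%O].

Definition poset_automorphism (f : P -> P) : Prop :=
  bijective f /\ forall x y, (f x <= f y)%O = (x <= y)%O.

(* R-action: a family Lam e (used only for e >= 0) *)
Definition is_Raction (R : realType) (Lam : R -> P -> P) : Prop :=
  [/\ forall e, 0 <= e -> poset_automorphism (Lam e),
      forall e p, 0 <= e -> (p <= Lam e p)%O,
      Lam 0 = id &
      forall e z, 0 <= e -> 0 <= z -> Lam e \o Lam z = Lam (e + z)].

(* Lambda_{-e}(J): image of J under the inverse automorphism of Lam e,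
   i.e. the preimage of J under the bijection Lam e *)
Definition Lam_neg (R : realType) (Lam : R -> P -> P) (e : R) (J : set P) : set P :=
  Lam e @^-1` J.

Definition Ex (R : realType) (Lam : R -> P -> P) (e : R) (A : set P) : set P :=
  upset (Lam e @^-1` A) `&` downset (Lam e @` A).

End Defs.

From HB Require Import structures.
From mathcomp Require Import all_boot all_order all_algebra.
From mathcomp Require Import boolp classical_sets reals.
Set Implicit Arguments. Unset Strict Implicit. Unset Printing Implicit Defensive.
Import Order.TTheory GRing.Theory Num.Theory.
Local Open Scope classical_set_scope.
Local Open Scope ring_scope.

(* Only the inclusion from right to left needs proof, and the second equation is
   the first with I and J swapped.  If x and Lam_{2e} x both lie in I ⊆ Ex_e(J),
   then Lam_e x is squeezed between two elements of J: the witness a ≤ x of the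
   upset gives Lam_e a ≤ Lam_e x with Lam_e a ∈ J, and the witness of the downset
   gives Lam_e (Lam_e x) ≤ Lam_e j, i.e. Lam_e x ≤ j with j ∈ J.  Convexity of J
   then puts Lam_e x in J. *)

Section UpDownSets.
Context {d : Order.disp_t} {P : porderType d}.

Lemma upsetE (A : set P) :
  A !=set0 -> upset A = [set p | exists2 a, A a & (a <= p)%O].
Proof.
by move=> /set0P A0; rewrite /upset; case: pselect => // /eqP; rewrite (negPf A0).
Qed.

Lemma downsetE (A : set P) :
  A !=set0 -> downset A = [set p | exists2 a, A a & (p <= a)%O].
Proof.
by move=> /set0P A0; rewrite /downset; case: pselect => // /eqP; rewrite (negPf A0).
Qed.

Variables (f : P -> P) (J : set P).
Hypothesis f_mono : {mono f : x y / (x <= y)%O}.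

Lemma upset_preimage_below x :
  (f @^-1` J) !=set0 -> upset (f @^-1` J) x -> exists2 j, J j & (j <= f x)%O.
Proof.
move=> J0; rewrite upsetE // => -[a Jfa le_ax].
by exists (f a); rewrite ?f_mono.
Qed.

Lemma downset_image_above x :
  J !=set0 -> downset (f @` J) (f x) -> exists2 j, J j & (x <= j)%O.
Proof.
move=> [j0 Jj0]; rewrite downsetE; last by exists (f j0), j0.
by move=> [_ [j Jj <-]]; rewrite f_mono; exists j.
Qed.

Lemma convex_sandwich_Ex x :
  convex_set J -> (f @^-1` J) !=set0 ->
  upset (f @^-1` J) x -> downset (f @` J) (f (f x)) -> J (f x).
Proof.
move=> Jconv Jf0 upx downffx.
have J0 : J !=set0 by case: Jf0 => y Jfy; exists (f y).
have [a Ja le_a] := upset_preimage_below Jf0 upx.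
have [b Jb le_b] := downset_image_above J0 downffx.
exact: Jconv Ja Jb le_a le_b.
Qed.

End UpDownSets.

Section RAction.
Context (R : realType) {d : Order.disp_t} {P : porderType d}.
Variables (Lam : R -> P -> P) (e : R).
Hypotheses (LamR : is_Raction Lam) (e_ge0 : 0 <= e).

Lemma Raction_mono : {mono Lam e : x y / (x <= y)%O}.
Proof. by case: LamR => aut _ _ _; case: (aut e e_ge0). Qed.

Lemma Raction_double x : Lam (2 * e) x = Lam e (Lam e x).
Proof. by case: LamR => _ _ _ comp; rewrite mulr2n mulrDl mul1r -comp. Qed.

Lemma Raction_preimage_neq0 (J : set P) : J !=set0 -> (Lam e @^-1` J) !=set0.
Proof.
case: LamR => aut _ _ _; have [[g _ Lam_g] _] := aut e e_ge0.
by move=> [j Jj]; exists (g j); rewrite /= Lam_g.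
Qed.

Lemma setI_Lam_neg_Ex (I J : set P) :
  is_interval J -> I `<=` Ex Lam e J ->
  I `&` Lam_neg Lam e J `&` Lam_neg Lam (2 * e) I = I `&` Lam_neg Lam (2 * e) I.
Proof.
move=> [J0 [Jconv _]] IEx; apply/seteqP; split=> x /=; first by case=> [[]].
move=> [Ix I2x]; split=> //; split=> //; rewrite /Lam_neg /= in I2x *.
have [upx _] := IEx x Ix.
have [_ down2x] := IEx _ I2x; rewrite Raction_double in down2x.
exact: (convex_sandwich_Ex (f := Lam e) Raction_mono) Jconv
  (Raction_preimage_neq0 J0) upx down2x.
Qed.

End RAction.

Theorem lemma2p16 (R : realType) (d : Order.disp_t) (P : porderType d)
  (Lam : R -> P -> P) (I J : set P) (e : R) :
  is_Raction Lam -> is_interval I -> is_interval J -> 0 <= e ->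
  I `<=` Ex Lam e J -> J `<=` Ex Lam e I ->
  (I `&` Lam_neg Lam e J `&` Lam_neg Lam (2 * e) I = I `&` Lam_neg Lam (2 * e) I) /\
  (J `&` Lam_neg Lam e I `&` Lam_neg Lam (2 * e) J = J `&` Lam_neg Lam (2 * e) J).
Proof.
move=> LamR intI intJ e_ge0 IEx JEx.
by split; apply: setI_Lam_neg_Ex.
Qed.
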